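(* Let $G$ be a finite group. Then $G$ has Property A if and only if $G$ is a direct product of Chermak-Delgado simple groups.
   Context: All groups are finite. A group $G$ has Property A if for every non-trivial abelian normal subgroup $A$ of $G$, $|G/C_G(A)| > |A|$. For $H \leq G$, the Chermak-Delgado measure of $H$ in $G$ is $m_G(H) = |H|\,|C_G(H)|$; let $m^*(G) = \max\{ m_G(H) : H \leq G\}$ and $\mathcal{CD}(G) = \{ H \leq G : m_G(H) = m^*(G)\}$. A group $G$ is Chermak-Delgado simple if $\mathcal{CD}(G) = \{1, G\}$. *)

From mathcomp Require Import all_boot all_fingroup all_solvable.
Set Implicit Arguments. Unset Strict Implicit. Unset Printing Implicit Defensive.
Import GroupScope.
Local Open Scope group_scope.

Definition propertyA (gT : finGroupType) (G : {group gT}) : Prop :=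
  forall A : {group gT}, A <| G -> A :!=: 1 -> abelian A ->
    (#|A| < #|G / 'C_G(A)|)%N.

Definition mCD (gT : finGroupType) (G H : {group gT}) : nat :=
  (#|H| * #|'C_G(H)|)%N.

Definition mstar (gT : finGroupType) (G : {group gT}) : nat :=
  \max_(H : {group gT} | H \subset G) mCD G H.

Definition CDset (gT : finGroupType) (G : {group gT}) : {set {group gT}} :=
  [set H : {group gT} | (H \subset G) && (mCD G H == mstar G)].

Definition CD_simple (gT : finGroupType) (G : {group gT}) : Prop :=
  CDset G = [set 1%G; G].

From mathcomp Require Import all_boot all_fingroup all_solvable.
From mathcomp Require Import zify.
Set Implicit Arguments. Unset Strict Implicit. Unset Printing Implicit Defensive.
Import GroupScope.

(* The Chermak-Delgado set CD(G) is closed under intersection and centralisers,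
   and the products of centralisers of two members are centralisers again.
   Property A forces every abelian member of CD(G), in particular H :&: C_G(H)
   for H in CD(G), to be trivial; hence m*(G) = |G| and G = H \x C_G(H) for
   every H in CD(G). A minimal non-trivial member B is normal (it is conjugate
   invariant by the product formula for centralisers) and CD-simple, and
   Property A passes to C_G(B), so induction splits G. Conversely, Property A
   holds for CD-simple groups (1 in CD(G) gives m*(G) = |G|, so an abelian
   normal A with |A||C_G(A)| = |G| would be 1 or G) and is preserved by direct
   products, since a normal abelian A of H \x K lies in the product of its two
   projections and its centraliser in that of their centralisers. *)

Lemma sqr_leq_mul_eq (m x y : nat) :
  x <= m -> y <= m -> (m * m <= x * y)%N -> x = m /\ y = m.
Proof. by move=> xm ym mxy; split; nia. Qed.

Section Measure.

Variables (gT : finGroupType) (G : {group gT}).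

Lemma mCD_le_mstar (H : {group gT}) : H \subset G -> mCD G H <= mstar G.
Proof. by move=> sHG; apply: leq_bigmax_cond. Qed.

Lemma mstar_attained : exists2 H : {group gT}, H \subset G & mCD G H = mstar G.
Proof.
rewrite /mstar (bigmax_eq_arg _ (sub1G G)).
by case: arg_maxnP => [|H sHG _]; [exact: sub1G | exists H].
Qed.

Lemma mCD1 : mCD G 1 = #|G|.
Proof. by rewrite /mCD cards1 mul1n cent1T setIT. Qed.

Lemma card_le_mstar : #|G| <= mstar G.
Proof. by rewrite -mCD1 mCD_le_mstar ?sub1G. Qed.

Lemma CDsetP (H : {group gT}) :
  reflect (H \subset G /\ mCD G H = mstar G) (H \in CDset G).
Proof. by rewrite inE; apply: (iffP andP) => [] [-> /eqP]. Qed.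

Lemma CDsetI (H K : {group gT}) :
  H \in CDset G -> K \in CDset G ->
  (H :&: K)%G \in CDset G /\ 'C_G(H) * 'C_G(K) = 'C_G(H :&: K).
Proof.
move=> /CDsetP[sHG mH] /CDsetP[sKG mK].
set X := (H <*> K)%G; set D := (H :&: K)%G.
have sXG : X \subset G by rewrite join_subG sHG.
have sDG : D \subset G by rewrite subIset ?sHG.
have sCCD : 'C_G(H) * 'C_G(K) \subset 'C_G(D).
  by rewrite mulG_subG !setIS ?centS ?subsetIl ?subsetIr.
have cCC : 'C_G(H) :&: 'C_G(K) = 'C_G(X).
  by apply/setP=> y; rewrite /X centY !inE; case: (y \in G).
(* |H||K| <= |X||D| and |C_G(H)||C_G(K)| = |C_G(H) C_G(K)||C_G(X)|, so the
   product of the two measures m*(G)^2 is at most m(X) times the number below. *)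
pose y := (#|D| * #|('C_G(H) * 'C_G(K))%g|)%N.
have le_yD : y <= mCD G D by rewrite leq_mul2l subset_leq_card ?orbT.
have le_sqr : mstar G * mstar G <= (mCD G X * y)%N.
  have le_HK : (#|H| * #|K| <= #|X| * #|D|)%N.
    rewrite mul_cardG leq_mul2r subset_leq_card ?orbT //.
    by rewrite mulG_subG joing_subl joing_subr.
  rewrite -{1}mH -mK /mCD mulnACA (mul_cardG 'C_G(H)) cCC [(_ * y)%N]mulnACA.
  by rewrite [(#|'C_G(X)| * _)%N]mulnC leq_mul.
have le_ym := leq_trans le_yD (mCD_le_mstar sDG).
have [_ ey] := sqr_leq_mul_eq (mCD_le_mstar sXG) le_ym le_sqr.
have eD : mCD G D = mstar G by apply/eqP; rewrite eqn_leq mCD_le_mstar // -ey.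
split; first by apply/CDsetP.
apply/eqP; rewrite eqEcard sCCD -(leq_pmul2l (cardG_gt0 D)).
by have : mCD G D <= y by rewrite eD ey.
Qed.

Lemma CDset_cent (H : {group gT}) : H \in CDset G -> 'C_G(H)%G \in CDset G.
Proof.
move=> /CDsetP[sHG mH]; apply/CDsetP; split; first exact: subsetIl.
apply/eqP; rewrite eqn_leq mCD_le_mstar ?subsetIl // -mH /mCD mulnC leq_mul2l.
by rewrite subset_leq_card ?orbT // subsetI sHG centsC subsetIr.
Qed.

Lemma CDset_conj (H : {group gT}) g :
  g \in G -> H \in CDset G -> (H :^ g)%G \in CDset G.
Proof.
move=> Gg /CDsetP[sHG mH]; apply/CDsetP.
rewrite -{1}(conjGid Gg) conjSg -mH /mCD /= cardJg centJ.
by rewrite -{2}(conjGid Gg) -conjIg cardJg.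
Qed.

Lemma minCDset_atom (B X : {group gT}) :
  [min B of Y | (Y \in CDset G) && (Y :!=: 1)] ->
  X \in CDset G -> X \subset B -> X :=: 1 \/ X :=: B.
Proof.
case/mingroupP=> _ minB XCD sXB; have [-> | ntX] := eqVneq (gval X) 1.
  by left.
by right; apply: minB; rewrite ?XCD.
Qed.

Lemma minCDset_normal (B : {group gT}) :
  [min B of X | (X \in CDset G) && (X :!=: 1)] -> B <| G.
Proof.
move=> minB; have /mingroupp/andP[BCD _] := minB.
have [sBG _] := CDsetP _ BCD.
rewrite /normal sBG; apply/normsP => g Gg.
have [DCD cCC] := CDsetI BCD (CDset_conj Gg BCD).
have [D1 | DB] := minCDset_atom minB DCD (subsetIl _ _); last first.
  apply/eqP; rewrite eq_sym eqEcard cardJg leqnn andbT -{1}DB.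
  exact: subsetIr.
(* Writing g = a b with a in C_G(B), b in C_G(B^g) gives B^g = B^b, and b
   normalises B^g. *)
rewrite /= D1 cent1T setIT in cCC.
rewrite -cCC in Gg; case/mulsgP: Gg => a b /setIP[_ cBa] /setIP[_ cBgb] defg.
have nBa : a \in 'N(B) by apply: (subsetP (cent_sub B)).
have nBgb : b^-1 \in 'N(B :^ g) by rewrite groupV (subsetP (cent_sub _)).
by rewrite -(normP nBgb) {1}defg conjsgM (normP nBa) conjsgK.
Qed.

End Measure.

Lemma card_quotient_cent (gT : finGroupType) (G A : {group gT}) :
  G \subset 'N(A) -> (#|G / 'C_G(A)| * #|'C_G(A)|)%N = #|G|.
Proof.
move=> nAG; rewrite card_quotient; first by rewrite mulnC Lagrange ?subsetIl.
by rewrite normsI ?normG ?norms_cent.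
Qed.

Lemma card_mulG_le (gT : finGroupType) (H K : {group gT}) :
  #|H * K| <= (#|H| * #|K|)%N.
Proof. by rewrite mul_cardG leq_pmulr ?cardG_gt0. Qed.

Lemma propertyA_normal_abelian (gT : finGroupType) (G A : {group gT}) :
  propertyA G -> A <| G -> abelian A -> A :!=: 1 -> (#|A| * #|'C_G(A)| < #|G|)%N.
Proof.
move=> pA nsAG abA ntA.
by rewrite -(card_quotient_cent (normal_norm nsAG)) ltn_pmul2r ?cardG_gt0 ?pA.
Qed.

Section PropertyA.

Variables (gT : finGroupType) (G : {group gT}).
Hypothesis pA : propertyA G.

Lemma propertyA_CDset_abelian (A : {group gT}) :
  A \in CDset G -> abelian A -> A :=: 1.
Proof.
move=> ACD abA; apply/eqP; apply: contraT => ntA.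
have [B minB sBA] :=
  mingroup_exists (gP := fun X => (X \in CDset G) && (X :!=: 1))
    (introT andP (conj ACD ntA)).
have /mingroupp/andP[/CDsetP[_ mB] ntB] := minB.
have := propertyA_normal_abelian pA (minCDset_normal minB) (abelianS sBA abA) ntB.
by rewrite -/(mCD G B) mB ltnNge card_le_mstar.
Qed.

Lemma propertyA_CDset_TI (H : {group gT}) :
  H \in CDset G -> H :&: 'C_G(H) = 1.
Proof.
move=> HCD; have [ZCD _] := CDsetI HCD (CDset_cent HCD).
apply: (propertyA_CDset_abelian ZCD); apply: subset_trans (subsetIr _ _) _.
by rewrite subIset // centS ?subsetIl ?orbT.
Qed.

Lemma propertyA_mstar : mstar G = #|G|.
Proof.
apply/eqP; rewrite eqn_leq card_le_mstar andbT.
have [H sHG mH] := mstar_attained G.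
have HCD : H \in CDset G by apply/CDsetP.
rewrite -mH /mCD -TI_cardMg ?propertyA_CDset_TI // subset_leq_card //.
by rewrite mulG_subG sHG subsetIl.
Qed.

Lemma propertyA_CDsetT : G \in CDset G.
Proof.
apply/CDsetP; split=> //; apply/eqP; rewrite eqn_leq mCD_le_mstar //.
by rewrite propertyA_mstar /mCD leq_pmulr ?cardG_gt0.
Qed.

Lemma propertyA_CDset_dprod (H : {group gT}) :
  H \in CDset G -> H \x 'C_G(H) = G.
Proof.
move=> HCD; have [sHG mH] := CDsetP _ _ HCD.
rewrite dprodE ?subsetIr ?propertyA_CDset_TI //; apply/eqP.
rewrite eqEcard mulG_subG sHG subsetIl TI_cardMg ?propertyA_CDset_TI //.
by rewrite -/(mCD G H) mH propertyA_mstar leqnn.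
Qed.

End PropertyA.

Section DirectProduct.

Variables (gT : finGroupType) (H K G : {group gT}).
Hypothesis defG : H \x K = G.

Lemma dprod_subcentl (X : {group gT}) :
  X \subset H -> K \x 'C_H(X) = 'C_G(X).
Proof.
move=> sXH; have [_ _ cHK _] := dprodP defG.
have cKX : K \subset 'C(X) := centsS sXH cHK.
have nHKX : X \subset 'N_'N(H)(K).
  by rewrite subsetI (subset_trans sXH (normG H)) cents_norm // centsC.
rewrite dprodC -(subcent_dprod defG nHKX).
by congr (_ \x _); apply/esym/setIidPl.
Qed.

Lemma propertyA_dprodl : propertyA G -> propertyA H.
Proof.
move=> pA A nsAH ntA abA; have [_ mulHK cHK _] := dprodP defG.
have [sAH nAH] := andP nsAH.
have nsAG : A <| G.
  rewrite /normal -mulHK (subset_trans sAH (mulG_subl _ _)) mulG_subG nAH.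
  by rewrite (subset_trans cHK) // (subset_trans (centS sAH)) ?cent_sub.
rewrite -(ltn_pmul2r (cardG_gt0 'C_H(A))) card_quotient_cent //.
rewrite -(ltn_pmul2r (cardG_gt0 K)) -mulnA [(#|'C_H(A)| * _)%N]mulnC.
rewrite (dprod_card (dprod_subcentl sAH)) (dprod_card defG).
by rewrite -(card_quotient_cent (normal_norm nsAG)) ltn_pmul2r ?cardG_gt0 ?pA.
Qed.

Lemma CDset_dprodl (X : {group gT}) :
  propertyA G -> X \subset H -> (X \in CDset H) = (X \in CDset G).
Proof.
move=> pA sXH; have sHG : H \subset G by rewrite -(dprodW defG) mulG_subl.
rewrite !inE sXH (subset_trans sXH sHG) /=.
rewrite (propertyA_mstar (propertyA_dprodl pA)) propertyA_mstar //.
rewrite -(dprod_card defG) /mCD -(dprod_card (dprod_subcentl sXH)).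
by rewrite mulnCA [(#|H| * #|K|)%N]mulnC eqn_pmul2l ?cardG_gt0.
Qed.

Lemma dprod_projections : exists f g : {morphism G >-> gT},
  [/\ f @* G = H, g @* G = K & {in G, forall x, f x * g x = x}].
Proof.
have cfH : trivm K @* K \subset 'C(idm H @* H) by rewrite morphim_trivm sub1G.
have cfK : idm K @* K \subset 'C(trivm H @* H) by rewrite morphim_trivm cents1.
exists (dprodm_morphism defG cfH), (dprodm_morphism defG cfK); split.
- by rewrite im_dprodm morphim_idm // morphim_trivm mulg1.
- by rewrite im_dprodm morphim_idm // morphim_trivm mul1g.
move=> x; rewrite -{1}(dprodW defG) => /mulsgP[h k Hh Kk ->] /=.
by rewrite !dprodmE //= /idm /trivm mulg1 mul1g.
Qed.

End DirectProduct.

Lemma propertyA_dprodr (gT : finGroupType) (G H K : {group gT}) :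
  H \x K = G -> propertyA G -> propertyA K.
Proof. by rewrite dprodC; apply: propertyA_dprodl. Qed.

Lemma sub_morphim_mul (gT : finGroupType) (G B : {group gT})
    (f g : {morphism G >-> gT}) :
  {in G, forall x, f x * g x = x} -> B \subset G -> B \subset f @* B * g @* B.
Proof.
move=> fgG sBG; apply/subsetP => x Bx; have Gx := subsetP sBG x Bx.
by rewrite -(fgG x Gx) mem_mulg ?mem_morphim.
Qed.

Lemma propertyA_normal_abelian_le (gT : finGroupType) (G A : {group gT}) :
  propertyA G -> A <| G -> abelian A -> (#|A| * #|'C_G(A)| <= #|G|)%N.
Proof.
move=> pA nsAG abA; have [-> | ntA] := eqVneq (gval A) 1.
  by rewrite cards1 mul1n cent1T setIT.
exact/ltnW/propertyA_normal_abelian.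
Qed.

Lemma propertyA_dprod (gT : finGroupType) (G H K : {group gT}) :
  H \x K = G -> propertyA H -> propertyA K -> propertyA G.
Proof.
move=> defG pH pK A nsAG ntA abA; have sAG := normal_sub nsAG.
have [f [g [fG gG fgG]]] := dprod_projections defG.
pose P := (f @* A)%G; pose Q := (g @* A)%G.
have nsPH : P <| H by rewrite -fG morphim_normal.
have nsQK : Q <| K by rewrite -gG morphim_normal.
have abP : abelian P by apply: morphim_abelian.
have abQ : abelian Q by apply: morphim_abelian.
have sAPQ : A \subset P * Q := sub_morphim_mul fgG sAG.
have sCA : 'C_G(A) \subset 'C_H(P) * 'C_K(Q).
  apply: subset_trans (sub_morphim_mul fgG (subsetIl G 'C(A))) _.
  by rewrite mulgSS // -?fG -?gG morphim_subcent.
have le_AC :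
    (#|A| * #|'C_G(A)| <= (#|P| * #|'C_H(P)|) * (#|Q| * #|'C_K(Q)|))%N.
  by rewrite mulnACA leq_mul // (leq_trans _ (card_mulG_le _ _))
    ?subset_leq_card.
rewrite -(ltn_pmul2r (cardG_gt0 'C_G(A))) card_quotient_cent ?normal_norm //.
rewrite -(dprod_card defG); apply: leq_ltn_trans le_AC _.
have lePH := propertyA_normal_abelian_le pH nsPH abP.
have leQK := propertyA_normal_abelian_le pK nsQK abQ.
have [P1 | ntP] := eqVneq (gval P) 1; last first.
  apply: leq_ltn_trans (leq_mul (leqnn _) leQK) _.
  by rewrite ltn_pmul2r ?cardG_gt0 ?propertyA_normal_abelian.
have [Q1 | ntQ] := eqVneq (gval Q) 1; last first.
  apply: leq_ltn_trans (leq_mul lePH (leqnn _)) _.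
  by rewrite ltn_pmul2l ?cardG_gt0 ?propertyA_normal_abelian.
by move: sAPQ ntA; rewrite P1 Q1 mulg1 => /trivgP ->; rewrite eqxx.
Qed.

Lemma CD_simple_propertyA (gT : finGroupType) (G : {group gT}) :
  CD_simple G -> propertyA G.
Proof.
move=> cdG A nsAG ntA abA; have sAG := normal_sub nsAG.
have [_ m1] : 1%G \subset G /\ mCD G 1 = mstar G.
  by apply/CDsetP; rewrite cdG set21.
rewrite mCD1 in m1.
rewrite -(ltn_pmul2r (cardG_gt0 'C_G(A))) card_quotient_cent ?normal_norm //.
rewrite ltn_neqAle -/(mCD G A) m1 mCD_le_mstar // andbT.
apply: contra ntA => /eqP mA.
have : A \in CDset G by apply/CDsetP.
rewrite cdG => /set2P[-> // | AG]; rewrite AG in mA abA.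
have cGG : 'C_G(G) = G by apply/setIidPl.
move/eqP: mA; rewrite /mCD cGG -m1 -{3}[#|G|]muln1 eqn_pmul2l ?cardG_gt0 //.
by rewrite AG -trivg_card1.
Qed.

Lemma minCDset_CD_simple (gT : finGroupType) (G B : {group gT}) :
  propertyA G -> [min B of X | (X \in CDset G) && (X :!=: 1)] -> CD_simple B.
Proof.
move=> pA minB; have /mingroupp/andP[BCD _] := minB.
have defG := propertyA_CDset_dprod pA BCD.
apply/setP => X; rewrite in_set2.
have [sXB | nsXB] := boolP (X \subset B); last first.
  rewrite inE (negbTE nsXB); apply/esym/norP.
  by split; apply: contra nsXB => /eqP ->; rewrite ?sub1G.
rewrite (CDset_dprodl defG pA sXB); apply/idP/orP => [XCD | [] /eqP -> //].
  by case: (minCDset_atom minB XCD sXB) => eX; [left | right];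
    apply/eqP/group_inj.
by apply/CDsetP; rewrite sub1G mCD1 propertyA_mstar.
Qed.

Lemma propertyA_bigdprod_CD_simple (gT : finGroupType) (G : {group gT}) :
  propertyA G -> exists n (F : 'I_n -> {group gT}),
    \big[dprod/1]_(i < n) F i = G /\ (forall i, CD_simple (F i)).
Proof.
elim: {G}_.+1 {-2}G (ltnSn #|G|) => // m IHm G leGm pA.
have [-> | ntG] := eqVneq (gval G) 1.
  by exists 0, (fun=> 1%G); rewrite big_ord0; split=> [|[]].
have [B minB _] :=
  mingroup_exists (gP := fun X => (X \in CDset G) && (X :!=: 1))
    (introT andP (conj (propertyA_CDsetT pA) ntG)).
have /mingroupp/andP[BCD ntB] := minB.
have defG := propertyA_CDset_dprod pA BCD.
have ltCm : #|'C_G(B)| < m.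
  rewrite -ltnS (leq_trans _ leGm) // -(dprod_card defG) ltnS.
  by rewrite ltn_Pmull ?cardG_gt0 ?cardG_gt1.
have [n [F [defC cdF]]] := IHm _ ltCm (propertyA_dprodr defG pA).
exists n.+1, (fun i => if unlift ord0 i is Some j then F j else B); split.
  rewrite big_ord_recl unlift_none (eq_bigr (fun i => gval (F i))) => [|i _].
    by rewrite defC.
  by rewrite liftK.
move=> i; case: (unlift ord0 i) => [j | ]; first exact: cdF.
exact: minCDset_CD_simple minB.
Qed.

Lemma bigdprod_CD_simple_propertyA (gT : finGroupType) n
    (F : 'I_n -> {group gT}) (G : {group gT}) :
  \big[dprod/1]_(i < n) F i = G -> (forall i, CD_simple (F i)) -> propertyA G.
Proof.
elim: n F G => [|n IHn] F G.
  rewrite big_ord0 => G1 _ A /normal_sub.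
  by rewrite -G1 => /trivgP ->; rewrite eqxx.
rewrite big_ord_recl => defG cdF.
have [[F0 K eF0 eK] _ _ _] := dprodP defG; rewrite eF0 eK in defG.
apply: (propertyA_dprod defG).
  by rewrite -(group_inj eF0); apply: CD_simple_propertyA.
by apply: (IHn (fun i => F (lift ord0 i))).
Qed.

Theorem theorem1 (gT : finGroupType) (G : {group gT}) :
  propertyA G <->
  exists (n : nat) (H : 'I_n -> {group gT}),
    \big[dprod/1]_(i < n) H i = G /\ (forall i, CD_simple (H i)).
Proof.
split; first exact: propertyA_bigdprod_CD_simple.
by case=> n [F [defG cdF]]; apply: bigdprod_CD_simple_propertyA defG cdF.
Qed.
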